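(* For real parameters $p,r$, the Stolarsky mean $E_{p,r}$ is stable if and only if $(p-2r)(r-2p)(p+r)=0$; i.e. the only stable Stolarsky means are the power means $E_{2r,r}=B_r$, $E_{p,2p}=B_p$, $E_{p,-p}=B_0$.
   Context: For $s,t>0$, $s\neq t$: $E_{p,r}(s,t)=\big[\frac{r(t^p-s^p)}{p(t^r-s^r)}\big]^{1/(p-r)}$ for $p\ne r$, $p,r\ne0$; $E_{r,r}(s,t)=e^{-1/r}\big(t^{t^r}/s^{s^r}\big)^{1/(t^r-s^r)}$ for $r\ne0$; $E_{0,r}(s,t)=\big[\frac{t^r-s^r}{r(\log t-\log s)}\big]^{1/r}$ for $r\ne0$ (and symmetrically $E_{p,0}=E_{0,p}$); $E_{0,0}(s,t)=\sqrt{st}$; $E_{p,r}(s,s)=s$. Power mean: $B_r(s,t)=\big(\frac{s^r+t^r}2\big)^{1/r}$ for $r\ne0$, $B_0(s,t)=\sqrt{st}$. A mean $M$ is stable if $M(s,t)=M\big(M(s,M(s,t)),M(M(s,t),t)\big)$ for all $s,t>0$. *)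

From Stdlib Require Import Reals.
Open Scope R_scope.

Definition stolarsky (p r s t : R) : R :=
  if Req_EM_T s t then s else
  if Req_EM_T p 0 then
    (if Req_EM_T r 0 then sqrt (s * t)
     else Rpower ((Rpower t r - Rpower s r) / (r * (ln t - ln s))) (1 / r))
  else if Req_EM_T r 0 then
    Rpower ((Rpower t p - Rpower s p) / (p * (ln t - ln s))) (1 / p)
  else if Req_EM_T p r then
    exp (- (1 / r)) *
      Rpower (Rpower t (Rpower t r) / Rpower s (Rpower s r))
             (1 / (Rpower t r - Rpower s r))
  else
    Rpower ((r * (Rpower t p - Rpower s p)) / (p * (Rpower t r - Rpower s r)))
           (1 / (p - r)).

Definition stable (M : R -> R -> R) : Prop :=
  forall s t : R, 0 < s -> 0 < t ->
    M s t = M (M s (M s t)) (M (M s t) t).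

(* In logarithmic coordinates s = e^x, t = e^y the Stolarsky mean reads
   E_{p,r}(e^x, e^y) = exp ((x + y)/2 + F((y - x)/2)) with F even and
   F(v) = a v^2 + b v^4 + O(v^6), a = (p + r)/6, b = -(p + r)(p^2 + r^2)/180;
   this follows from ln (sinh z / z) = z^2/6 - z^4/180 + O(z^6) (and from
   z coth z - 1, its logarithmic derivative, on the diagonal p = r).
   Expanding the stability equation at (x, y) = (-u, u) to order u^4 forces
   3b + 2a^3 = 0, and 270 (3b + 2a^3) = (p - 2r)(r - 2p)(p + r).
   Conversely, on these three lines E_{p,r} is a power mean B_r or the geometric
   mean, and these are stable because B_r(s,t)^r is the arithmetic mean of
   s^r and t^r. *)

From Stdlib Require Import Reals Lra Lia.
From Coquelicot Require Import Coquelicot.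
Open Scope R_scope.

Definition bigO (k : nat) (f : R -> R) : Prop :=
  exists u0 D, 0 < u0 /\ forall u, 0 < u <= u0 -> Rabs (f u) <= D * u ^ k.

Lemma bigO_const_ge0 k f u0 D : 0 < u0 ->
  (forall u, 0 < u <= u0 -> Rabs (f u) <= D * u ^ k) -> 0 <= D.
Proof.
  intros Hu0 Hf; specialize (Hf u0 (conj Hu0 (Rle_refl _))).
  assert (0 < u0 ^ k) by (apply pow_lt; lra).
  pose proof (Rabs_pos (f u0)); nra.
Qed.

Lemma bigO_ext k f g : (forall u, 0 < u -> f u = g u) -> bigO k f -> bigO k g.
Proof.
  intros E [a [D [Ha H]]]; exists a, D; split; auto.
  intros u Hu; rewrite <- E by lra; auto.
Qed.

Lemma bigO_add k f g : bigO k f -> bigO k g -> bigO k (fun u => f u + g u).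
Proof.
  intros [a [D [Ha H]]] [b [E [Hb H']]].
  exists (Rmin a b), (D + E); split; [now apply Rmin_glb_lt|].
  intros u [Hu Hu']; pose proof (Rmin_l a b); pose proof (Rmin_r a b).
  specialize (H u ltac:(lra)); specialize (H' u ltac:(lra)).
  eapply Rle_trans; [apply Rabs_triang | lra].
Qed.

Lemma bigO_scal k c f : bigO k f -> bigO k (fun u => c * f u).
Proof.
  intros [a [D [Ha H]]]; exists a, (Rabs c * D); split; auto.
  intros u Hu; rewrite Rabs_mult, Rmult_assoc.
  apply Rmult_le_compat_l; [apply Rabs_pos | auto].
Qed.

Lemma bigO_sub k f g : bigO k f -> bigO k g -> bigO k (fun u => f u - g u).
Proof.
  intros Hf Hg; apply (bigO_ext k (fun u => f u + (-1) * g u)); [intros; ring|].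
  now apply bigO_add, bigO_scal.
Qed.

Lemma bigO_mul j k n f g : (j + k = n)%nat -> bigO j f -> bigO k g ->
  bigO n (fun u => f u * g u).
Proof.
  intros <- [a [D [Ha H]]] [b [E [Hb H']]].
  exists (Rmin a b), (D * E); split; [now apply Rmin_glb_lt|].
  intros u [Hu Hu']; pose proof (Rmin_l a b); pose proof (Rmin_r a b).
  specialize (H u ltac:(lra)); specialize (H' u ltac:(lra)).
  rewrite Rabs_mult, pow_add.
  replace (D * E * (u ^ j * u ^ k)) with ((D * u ^ j) * (E * u ^ k)) by ring.
  apply Rmult_le_compat; auto; apply Rabs_pos.
Qed.

Lemma pow_le_pow_le1 u j k : 0 < u <= 1 -> (j <= k)%nat -> u ^ k <= u ^ j.
Proof.
  intros Hu Hjk; replace k with (j + (k - j))%nat by lia; rewrite pow_add.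
  assert (0 < u ^ j) by (apply pow_lt; lra).
  assert (u ^ (k - j) <= 1 ^ (k - j)) by (apply pow_incr; lra).
  rewrite pow1 in *; nra.
Qed.

Lemma bigO_weaken j k f : (j <= k)%nat -> bigO k f -> bigO j f.
Proof.
  intros Hjk [a [D [Ha H]]]; pose proof (bigO_const_ge0 _ _ _ _ Ha H) as HD.
  exists (Rmin a 1), D; split; [apply Rmin_glb_lt; lra|].
  intros u [Hu Hu']; pose proof (Rmin_l a 1); pose proof (Rmin_r a 1).
  eapply Rle_trans; [apply H; lra|].
  apply Rmult_le_compat_l; auto; apply pow_le_pow_le1; auto; lra.
Qed.

Lemma bigO_pow n : bigO n (fun u => u ^ n).
Proof.
  exists 1, 1; split; [lra|]; intros u Hu.
  rewrite Rabs_right; [lra | apply Rle_ge, pow_le; lra].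
Qed.

Lemma bigO_id : bigO 1 (fun u => u).
Proof. apply (bigO_ext 1 (fun u => u ^ 1)); [intros; ring | apply bigO_pow]. Qed.

Lemma bigO_sqr : bigO 2 (fun u => u * u).
Proof. apply (bigO_ext 2 (fun u => u ^ 2)); [intros; ring | apply bigO_pow]. Qed.

Lemma bigO2_small f : bigO 2 f -> forall c, 0 < c ->
  exists u1, 0 < u1 /\ forall u, 0 < u <= u1 -> Rabs (f u) <= c * u.
Proof.
  intros [a [D [Ha H]]] c Hc; pose proof (bigO_const_ge0 _ _ _ _ Ha H) as HD.
  exists (Rmin a (c / (D + 1))); split.
  { apply Rmin_glb_lt; auto; apply Rdiv_lt_0_compat; lra. }
  intros u [Hu Hu'].
  pose proof (Rmin_l a (c / (D + 1))); pose proof (Rmin_r a (c / (D + 1))).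
  eapply Rle_trans; [apply H; lra|].
  assert (u * (D + 1) <= c).
  { assert (Huc : u <= c / (D + 1)) by lra.
    apply (Rmult_le_compat_r (D + 1)) in Huc; [|lra].
    replace (c / (D + 1) * (D + 1)) with c in Huc by (field; lra); lra. }
  simpl; nra.
Qed.

Lemma bigO6_quartic_eq0 K : bigO 6 (fun u => K * u ^ 4) -> K = 0.
Proof.
  intros [a [D [Ha H]]]; pose proof (bigO_const_ge0 _ _ _ _ Ha H) as HD.
  destruct (Req_dec K 0) as [|HK]; auto; exfalso.
  assert (HK' : 0 < Rabs K) by (apply Rabs_pos_lt; auto).
  set (u := Rmin (Rmin a 1) (Rabs K / (2 * (D + 1)))).
  assert (Hu : 0 < u).
  { unfold u; repeat apply Rmin_glb_lt; try lra; apply Rdiv_lt_0_compat; lra. }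
  assert (Hua : u <= a) by (unfold u; eapply Rle_trans; apply Rmin_l).
  assert (Hu1 : u <= 1) by (unfold u; eapply Rle_trans; [apply Rmin_l | apply Rmin_r]).
  assert (HuK : u * (2 * (D + 1)) <= Rabs K).
  { assert (Hu' : u <= Rabs K / (2 * (D + 1))) by apply Rmin_r.
    apply (Rmult_le_compat_r (2 * (D + 1))) in Hu'; [|lra].
    replace (Rabs K / (2 * (D + 1)) * (2 * (D + 1))) with (Rabs K) in Hu' by (field; lra); lra. }
  specialize (H u ltac:(lra)).
  rewrite Rabs_mult, (Rabs_right (u ^ 4)) in H by (apply Rle_ge, pow_le; lra).
  assert (0 < u ^ 4) by (apply pow_lt; lra).
  replace (u ^ 6) with (u ^ 4 * (u * u)) in H by ring.
  assert (Rabs K <= D * (u * u)) by nra.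
  assert (u * u <= u) by nra; nra.
Qed.

Definition log_mean (F : R -> R) (x y : R) : R := (x + y) / 2 + F ((y - x) / 2).

Section StabilityConstraint.

Variables (F : R -> R) (alpha beta C d0 : R).
Hypothesis d0_pos : 0 < d0.
Hypothesis F_expansion : forall v, Rabs v <= d0 ->
  Rabs (F v - (alpha * v ^ 2 + beta * v ^ 4)) <= C * v ^ 6.

Let quartic v := alpha * v ^ 2 + beta * v ^ 4.

Lemma F_remainder_comp (g : R -> R) :
  (exists u1, 0 < u1 /\ forall u, 0 < u <= u1 -> Rabs (g u) <= u) ->
  bigO 6 (fun u => F (g u) - quartic (g u)).
Proof.
  intros [u1 [Hu1 Hg]]; exists (Rmin u1 d0), (Rabs C); split; [now apply Rmin_glb_lt|].
  intros u [Hu Hu']; pose proof (Rmin_l u1 d0); pose proof (Rmin_r u1 d0).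
  specialize (Hg u ltac:(lra)).
  eapply Rle_trans; [apply F_expansion; lra|].
  assert (g u ^ 6 <= u ^ 6).
  { replace (g u ^ 6) with (Rabs (g u) ^ 6).
    - apply pow_incr; split; [apply Rabs_pos | auto].
    - replace 6%nat with (2 * 3)%nat by lia; rewrite !pow_mult, pow2_abs; reflexivity. }
  assert (0 <= g u ^ 6) by (replace 6%nat with (2 * 3)%nat by lia;
                            rewrite pow_mult; apply pow_le, pow2_ge_0).
  pose proof (Rle_abs C); pose proof (Rabs_pos C); nra.
Qed.

Lemma F_remainder : bigO 6 (fun u => F u - quartic u).
Proof.
  apply (F_remainder_comp (fun u => u)).
  exists 1; split; [lra|]; intros u Hu; rewrite Rabs_right; lra.
Qed.

Lemma F_bigO2 : bigO 2 F.
Proof.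
  apply (bigO_ext 2 (fun u => (F u - quartic u) + (alpha * u ^ 2 + beta * u ^ 4))).
  { intros; unfold quartic; ring. }
  apply bigO_add; [apply (bigO_weaken 2 6); [lia | apply F_remainder]|].
  apply bigO_add; apply bigO_scal; [apply bigO_pow|].
  apply (bigO_weaken 2 4); [lia | apply bigO_pow].
Qed.

Lemma F_sub_quadratic_bigO4 : bigO 4 (fun u => F u - alpha * (u * u)).
Proof.
  apply (bigO_ext 4 (fun u => (F u - quartic u) + beta * u ^ 4)).
  { intros; unfold quartic; ring. }
  apply bigO_add; [apply (bigO_weaken 4 6); [lia | apply F_remainder]|].
  apply bigO_scal, bigO_pow.
Qed.

(* The arguments of [F] in the stability equation at (-u, u): with m = F u,
   the inner means evaluate [F] at [w1 u] and [w2 u], the outer one at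
   [outer_arg u = u/2 + half_gap u]. *)
Let w1 u := (F u - - u) / 2.
Let w2 u := (u - F u) / 2.
Let half_gap u := (F (w2 u) - F (w1 u)) / 2.
Let outer_arg u := (((F u + u) / 2 + F (w2 u)) - ((- u + F u) / 2 + F (w1 u))) / 2.

Lemma F_small_arg (g : R -> R) (c : R) :
  (exists u1, 0 < u1 /\ forall u, 0 < u <= u1 -> Rabs (g u - u / 2) <= c * u) ->
  c <= / 2 -> bigO 6 (fun u => F (g u) - quartic (g u)).
Proof.
  intros [u1 [Hu1 Hg]] Hc; apply F_remainder_comp; exists u1; split; auto.
  intros u Hu; specialize (Hg u Hu); apply Rabs_le_between in Hg.
  apply Rabs_le_between; nra.
Qed.

Lemma F_remainder_w : bigO 6 (fun u => F (w1 u) - quartic (w1 u))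
                   /\ bigO 6 (fun u => F (w2 u) - quartic (w2 u)).
Proof.
  destruct (bigO2_small _ F_bigO2 1 ltac:(lra)) as [u1 [Hu1 Hsm]].
  split; apply (F_small_arg _ (/ 2)); try lra; exists u1; split; auto;
    intros u Hu; specialize (Hsm u Hu); unfold w1, w2;
    apply Rabs_le_between; apply Rabs_le_between in Hsm; lra.
Qed.

Lemma half_gap_bigO5 : bigO 5 (fun u => half_gap u + alpha * F u * u / 2).
Proof.
  destruct F_remainder_w as [Hw1 Hw2].
  apply (bigO_ext 5 (fun u => (- (beta / 4)) * (F u * (u * (u * u + F u * F u)))
           + / 2 * ((F (w2 u) - quartic (w2 u)) - (F (w1 u) - quartic (w1 u))))).
  { intros; unfold half_gap, w1, w2, quartic; field. }
  apply bigO_add; [apply bigO_scal | apply bigO_scal, (bigO_weaken 5 6); auto using bigO_sub].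
  apply (bigO_mul 2 3); [lia | apply F_bigO2|].
  apply (bigO_mul 1 2); [lia | apply bigO_id|].
  apply bigO_add; [apply bigO_sqr|].
  apply (bigO_weaken 2 4); [lia | apply (bigO_mul 2 2); auto using F_bigO2].
Qed.

Lemma half_gap_bigO3 : bigO 3 half_gap.
Proof.
  apply (bigO_ext 3 (fun u => (half_gap u + alpha * F u * u / 2) + (- (alpha / 2)) * (F u * u))).
  { intros; field. }
  apply bigO_add; [apply (bigO_weaken 3 5); [lia | apply half_gap_bigO5]|].
  apply bigO_scal, (bigO_mul 2 1); [lia | apply F_bigO2 | apply bigO_id].
Qed.

Lemma F_remainder_outer : bigO 6 (fun u => F (outer_arg u) - quartic (outer_arg u)).
Proof.
  destruct (bigO2_small _ (bigO_weaken 2 3 _ ltac:(lia) half_gap_bigO3) (/ 2) ltac:(lra))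
    as [u2 [Hu2 Hsmall]].
  apply (F_small_arg _ (/ 2)); [|lra]; exists u2; split; auto.
  intros u Hu; replace (outer_arg u - u / 2) with (half_gap u) by (unfold outer_arg, half_gap; field).
  auto.
Qed.

(* The defect of the stability equation at (-u, u), minus its u^4 term
   (see [stability_remainder_eq]), written as a sum of terms that are each
   visibly O(u^6) once m = F u, f1 = F (w1 u), f2 = F (w2 u), f3 = F (outer_arg u). *)
Definition stability_remainder (u m f1 f2 f3 : R) : R :=
  let d := (f2 - f1) / 2 in
  let q := m - alpha * (u * u) in
    / 2 * (m - quartic u)
  + (- (alpha / 4)) * (q * (m + alpha * (u * u)))
  + (- (beta / 16)) * (6 * ((u * u) * (m * m)) + (m * m) * (m * m))
  + (- alpha) * (u * (d + alpha * m * u / 2))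
  + (alpha ^ 2 / 2) * ((u * u) * q)
  + (- alpha) * (d * d)
  + (- beta) * (d * ((u + d) * ((/ 2 * u + d) * (/ 2 * u + d) + / 4 * (u * u))))
  + (- / 2) * ((f1 - quartic ((m - - u) / 2)) + (f2 - quartic ((u - m) / 2)))
  + (-1) * (f3 - quartic ((((m + u) / 2 + f2) - ((- u + m) / 2 + f1)) / 2)).

Lemma stability_remainder_eq u m f1 f2 f3 :
  stability_remainder u m f1 f2 f3 =
  (m - (((- u + m) / 2 + f1 + ((m + u) / 2 + f2)) / 2 + f3))
  - (3 * beta + 2 * alpha ^ 3) / 8 * u ^ 4.
Proof. unfold stability_remainder, quartic; field. Qed.

Lemma stability_remainder_bigO6 :
  bigO 6 (fun u => stability_remainder u (F u) (F (w1 u)) (F (w2 u)) (F (outer_arg u))).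
Proof.
  destruct F_remainder_w as [Hw1 Hw2].
  pose proof F_bigO2 as HF2; pose proof F_sub_quadratic_bigO4 as Hq.
  pose proof half_gap_bigO3 as Hd; pose proof bigO_sqr as Hsq; pose proof bigO_id as Hid.
  assert (HFF : bigO 4 (fun u => F u * F u)) by (apply (bigO_mul 2 2); auto).
  unfold stability_remainder; repeat apply bigO_add.
  - apply bigO_scal, F_remainder.
  - apply bigO_scal, (bigO_mul 4 2); [lia | auto | apply bigO_add; auto using bigO_scal].
  - apply bigO_scal, bigO_add; [apply bigO_scal, (bigO_mul 2 4); auto|].
    apply (bigO_weaken 6 8); [lia | apply (bigO_mul 4 4); auto].
  - apply bigO_scal, (bigO_mul 1 5); [lia | auto | apply half_gap_bigO5].
  - apply bigO_scal, (bigO_mul 2 4); auto.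
  - apply bigO_scal, (bigO_mul 3 3); auto.
  - apply bigO_scal, (bigO_mul 3 3); [lia | auto|].
    assert (Hu_d : bigO 1 (fun u => / 2 * u + half_gap u)).
    { apply bigO_add; [apply bigO_scal, Hid | apply (bigO_weaken 1 3); auto]. }
    apply (bigO_mul 1 2); [lia | apply bigO_add; [|apply (bigO_weaken 1 3)]; auto|].
    apply bigO_add; [apply (bigO_mul 1 1); auto | apply bigO_scal; auto].
  - apply bigO_scal, bigO_add; auto.
  - apply bigO_scal, F_remainder_outer.
Qed.

Hypothesis F_stable : forall u, 0 < u ->
  F u = log_mean F (log_mean F (- u) (F u)) (log_mean F (F u) u).

Theorem stable_expansion_constraint : 3 * beta + 2 * alpha ^ 3 = 0.
Proof.
  assert (HK : - ((3 * beta + 2 * alpha ^ 3) / 8) = 0); [|lra].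
  apply bigO6_quartic_eq0; eapply bigO_ext; [|exact stability_remainder_bigO6].
  intros u Hu; cbv beta; rewrite stability_remainder_eq.
  pose proof (F_stable u Hu) as H; unfold log_mean in H.
  unfold outer_arg, w1, w2; cbv beta; rewrite <- H; ring.
Qed.

End StabilityConstraint.

Lemma nonneg_of_deriv_nonneg (f f' : R -> R) X :
  (forall x, 0 <= x <= X -> is_derive f x (f' x)) -> f 0 = 0 ->
  (forall x, 0 <= x <= X -> 0 <= f' x) -> forall x, 0 <= x <= X -> 0 <= f x.
Proof.
  intros Hd H0 Hp x Hx; destruct (Req_dec x 0) as [->|Hx0]; [lra|].
  destruct (MVT_cor2 f f' 0 x) as [c [Hc1 Hc2]]; [lra| |].
  { intros c Hc; apply is_derive_Reals, Hd; lra. }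
  assert (0 <= f' c) by (apply Hp; lra); nra.
Qed.

Lemma deriv_sandwich (f f' g g' : R -> R) X :
  (forall x, 0 <= x <= X -> is_derive f x (f' x)) ->
  (forall x, 0 <= x <= X -> is_derive g x (g' x)) -> f 0 = 0 -> g 0 = 0 ->
  (forall x, 0 <= x <= X -> 0 <= f' x <= g' x) ->
  forall x, 0 <= x <= X -> 0 <= f x <= g x.
Proof.
  intros Hf Hg f0 g0 Hb x Hx; split.
  - apply (nonneg_of_deriv_nonneg f f' X); auto; intros; apply Hb; auto.
  - enough (0 <= g x - f x) by lra.
    apply (nonneg_of_deriv_nonneg (fun x => g x - f x) (fun x => g' x - f' x) X); auto.
    + intros; apply @is_derive_minus; auto.
    + lra.
    + intros y Hy; specialize (Hb y Hy); lra.
Qed.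

Lemma cosh_le_2 x : 0 <= x <= 1 -> 0 <= cosh x <= 2.
Proof.
  intros Hx; unfold cosh; pose proof (exp_pos x); pose proof (exp_pos (- x)).
  assert (exp x <= exp 1).
  { destruct (Req_dec x 1) as [->|]; [lra | left; apply exp_increasing; lra]. }
  assert (exp (- x) <= exp 0).
  { destruct (Req_dec x 0) as [->|]; [rewrite Ropp_0; lra | left; apply exp_increasing; lra]. }
  pose proof exp_le_3; rewrite exp_0 in *; lra.
Qed.

(* Each Taylor bound on [0, 1] follows from the previous one by [deriv_sandwich],
   since sinh and cosh are each other's derivatives. *)
Ltac taylor_step f f' g g' prev :=
  apply (deriv_sandwich f f' g g' 1);
  [ intros; unfold sinh, cosh; auto_derive; [auto | field]
  | intros; auto_derive; [auto | field]
  | cbv beta; unfold sinh, cosh; rewrite ?Ropp_0, ?exp_0; field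
  | cbv beta; field
  | intros; apply prev; auto ].

Lemma sinh_taylor1 : forall x, 0 <= x <= 1 -> 0 <= sinh x <= 2 * x.
Proof. taylor_step sinh cosh (fun x => 2 * x) (fun _ : R => 2) cosh_le_2. Qed.

Lemma cosh_taylor2 : forall x, 0 <= x <= 1 -> 0 <= cosh x - 1 <= x ^ 2.
Proof.
  taylor_step (fun x => cosh x - 1) sinh (fun x => x ^ 2) (fun x => 2 * x) sinh_taylor1.
Qed.

Lemma sinh_taylor3 : forall x, 0 <= x <= 1 -> 0 <= sinh x - x <= x ^ 3 / 3.
Proof.
  taylor_step (fun x => sinh x - x) (fun x => cosh x - 1) (fun x => x ^ 3 / 3) (fun x => x ^ 2)
    cosh_taylor2.
Qed.

Lemma cosh_taylor4 : forall x, 0 <= x <= 1 -> 0 <= cosh x - 1 - x ^ 2 / 2 <= x ^ 4 / 12.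
Proof.
  taylor_step (fun x => cosh x - 1 - x ^ 2 / 2) (fun x => sinh x - x)
    (fun x => x ^ 4 / 12) (fun x => x ^ 3 / 3) sinh_taylor3.
Qed.

Lemma sinh_taylor5 : forall x, 0 <= x <= 1 ->
  0 <= sinh x - x - x ^ 3 / 6 <= x ^ 5 / 60.
Proof.
  taylor_step (fun x => sinh x - x - x ^ 3 / 6) (fun x => cosh x - 1 - x ^ 2 / 2)
    (fun x => x ^ 5 / 60) (fun x => x ^ 4 / 12) cosh_taylor4.
Qed.

Lemma cosh_taylor6 : forall x, 0 <= x <= 1 ->
  0 <= cosh x - 1 - x ^ 2 / 2 - x ^ 4 / 24 <= x ^ 6 / 360.
Proof.
  taylor_step (fun x => cosh x - 1 - x ^ 2 / 2 - x ^ 4 / 24) (fun x => sinh x - x - x ^ 3 / 6)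
    (fun x => x ^ 6 / 360) (fun x => x ^ 5 / 60) sinh_taylor5.
Qed.

Lemma sinh_taylor7 : forall x, 0 <= x <= 1 ->
  0 <= sinh x - x - x ^ 3 / 6 - x ^ 5 / 120 <= x ^ 7 / 2520.
Proof.
  taylor_step (fun x => sinh x - x - x ^ 3 / 6 - x ^ 5 / 120)
    (fun x => cosh x - 1 - x ^ 2 / 2 - x ^ 4 / 24)
    (fun x => x ^ 7 / 2520) (fun x => x ^ 6 / 360) cosh_taylor6.
Qed.

Lemma ln_1p_taylor w : 0 <= w -> w - w ^ 2 / 2 <= ln (1 + w) <= w - w ^ 2 / 2 + w ^ 3 / 3.
Proof.
  intros Hw; split.
  - enough (0 <= ln (1 + w) - (w - w ^ 2 / 2)) by lra.
    apply (nonneg_of_deriv_nonneg (fun x => ln (1 + x) - (x - x ^ 2 / 2))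
             (fun x => x ^ 2 / (1 + x)) w); [| | |lra].
    + intros x Hx; auto_derive; [lra | field; lra].
    + cbv beta; rewrite Rplus_0_r, ln_1; lra.
    + intros x Hx; apply Rdiv_le_0_compat; nra.
  - enough (0 <= (w - w ^ 2 / 2 + w ^ 3 / 3) - ln (1 + w)) by lra.
    apply (nonneg_of_deriv_nonneg (fun x => (x - x ^ 2 / 2 + x ^ 3 / 3) - ln (1 + x))
             (fun x => x ^ 3 / (1 + x)) w); [| | |lra].
    + intros x Hx; auto_derive; [lra | field; lra].
    + cbv beta; rewrite Rplus_0_r, ln_1; lra.
    + intros x Hx; apply Rdiv_le_0_compat; [apply pow_le|]; lra.
Qed.

Lemma sinh_opp z : sinh (- z) = - sinh z.
Proof. unfold sinh; rewrite Ropp_involutive; field. Qed.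

Lemma cosh_opp z : cosh (- z) = cosh z.
Proof. unfold cosh; rewrite Ropp_involutive; field. Qed.

Lemma sinhc_pos z : z <> 0 -> 0 < sinh z / z.
Proof.
  intros Hz; pose proof sinh_0.
  destruct (Rlt_dec 0 z).
  - apply Rdiv_lt_0_compat; auto; pose proof (sinh_lt 0 z); lra.
  - replace (sinh z / z) with (sinh (- z) / (- z)) by (rewrite sinh_opp; field; auto).
    apply Rdiv_lt_0_compat; [pose proof (sinh_lt 0 (- z))|]; lra.
Qed.

Lemma sinh_neq0 z : z <> 0 -> sinh z <> 0.
Proof.
  intros Hz H; pose proof (sinhc_pos z Hz) as Hpos.
  rewrite H in Hpos; unfold Rdiv in Hpos; lra.
Qed.

Definition log_sinhc (z : R) : R := ln (sinh z / z).
Definition zcoth_sub1 (z : R) : R := z * cosh z / sinh z - 1.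

Lemma log_sinhc_expansion_pos z : 0 < z <= 1 ->
  Rabs (log_sinhc z - (z ^ 2 / 6 - z ^ 4 / 180)) <= z ^ 6.
Proof.
  intros Hz; pose proof (sinh_taylor7 z ltac:(lra)) as H7.
  set (rho := sinh z - z - z ^ 3 / 6 - z ^ 5 / 120) in *.
  set (t := z ^ 2).
  assert (Ht : 0 < t <= 1) by (unfold t; split; [apply pow_lt | simpl]; nra).
  set (r' := rho / z).
  assert (Hr : 0 <= r' <= t ^ 3 / 2520).
  { unfold r', t; split; [apply Rdiv_le_0_compat; lra|].
    apply (Rmult_le_reg_r z); [lra|].
    unfold Rdiv at 1; rewrite Rmult_assoc, Rinv_l by lra.
    replace ((z ^ 2) ^ 3 / 2520 * z) with (z ^ 7 / 2520) by field; lra. }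
  set (h := t ^ 2 / 120 + r').
  assert (Hh : 0 <= h <= t ^ 2 / 100).
  { assert (0 <= t ^ 2) by (apply pow_le; lra).
    assert (t ^ 3 <= t ^ 2) by (simpl; nra).
    unfold h; lra. }
  set (w := t / 6 + h).
  assert (Hw : sinh z / z = 1 + w) by (unfold w, h, r', t, rho; field; lra).
  assert (Hw0 : 0 <= w <= t / 5) by (assert (t ^ 2 <= t) by (simpl; nra); unfold w; lra).
  unfold log_sinhc; rewrite Hw; pose proof (ln_1p_taylor w ltac:(lra)) as [L1 L2].
  set (th := ln (1 + w) - (w - w ^ 2 / 2)).
  assert (Hth : 0 <= th <= t ^ 3 / 375).
  { assert (w ^ 3 <= (t / 5) ^ 3) by (apply pow_incr; lra).
    assert ((t / 5) ^ 3 = t ^ 3 / 125) by field.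
    unfold th; lra. }
  assert (E : ln (1 + w) - (t / 6 - z ^ 4 / 180) = r' - t * h / 6 - h ^ 2 / 2 + th).
  { unfold th; replace (z ^ 4) with (t ^ 2) by (unfold t; ring); unfold w, h; field. }
  rewrite E; replace (z ^ 6) with (t ^ 3) by (unfold t; ring).
  assert (0 <= t * h <= t ^ 3 / 100) by (replace (t ^ 3) with (t * t ^ 2) by ring; nra).
  assert (0 <= h ^ 2 <= t ^ 3 / 10000).
  { assert (h ^ 2 <= (t ^ 2 / 100) ^ 2) by (apply pow_incr; lra).
    assert (t ^ 4 <= t ^ 3) by (replace (t ^ 4) with (t ^ 3 * t) by ring;
                                assert (0 < t ^ 3) by (apply pow_lt; lra); nra).
    split; [apply pow2_ge_0 | lra]. }
  assert (0 < t ^ 3) by (apply pow_lt; lra).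
  apply Rabs_le; lra.
Qed.

Lemma zcoth_sub1_expansion_pos z : 0 < z <= 1 ->
  Rabs (zcoth_sub1 z - (z ^ 2 / 3 - z ^ 4 / 45)) <= z ^ 6.
Proof.
  intros Hz; pose proof (sinh_taylor7 z ltac:(lra)) as H7.
  pose proof (cosh_taylor6 z ltac:(lra)) as H6; pose proof (sinh_taylor3 z ltac:(lra)).
  set (rho := sinh z - z - z ^ 3 / 6 - z ^ 5 / 120) in *.
  set (ga := cosh z - 1 - z ^ 2 / 2 - z ^ 4 / 24) in *.
  set (N := z * cosh z - sinh z * (1 + z ^ 2 / 3 - z ^ 4 / 45)).
  assert (E : zcoth_sub1 z - (z ^ 2 / 3 - z ^ 4 / 45) = N / sinh z)
    by (unfold zcoth_sub1, N; field; lra).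
  assert (EN : N = z * ga + z ^ 7 / 1080 + z ^ 9 / 5400 - rho * (1 + z ^ 2 / 3 - z ^ 4 / 45))
    by (unfold N, ga, rho; field).
  assert (Hz2 : 0 < z ^ 2 <= 1) by (split; [apply pow_lt | simpl]; nra).
  assert (Hz4 : 0 < z ^ 4 <= z ^ 2) by (split; [apply pow_lt | simpl]; nra).
  assert (0 <= rho * (1 + z ^ 2 / 3 - z ^ 4 / 45) <= z ^ 7 / 1260) by (split; nra).
  assert (0 <= z * ga <= z ^ 7 / 360) by (replace (z ^ 7) with (z * z ^ 6) by ring; nra).
  assert (0 < z ^ 7) by (apply pow_lt; lra).
  assert (0 <= z ^ 9 <= z ^ 7) by (replace (z ^ 9) with (z ^ 7 * z ^ 2) by ring; nra).
  assert (HN : Rabs N <= z ^ 7 / 100) by (rewrite EN; apply Rabs_le; lra).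
  rewrite E; unfold Rdiv; rewrite Rabs_mult, Rabs_inv, (Rabs_right (sinh z)) by lra.
  apply (Rmult_le_reg_r (sinh z)); [lra|]; rewrite Rmult_assoc, Rinv_l by lra.
  assert (0 < z ^ 6) by (apply pow_lt; lra).
  replace (z ^ 7) with (z ^ 6 * z) in HN by ring; nra.
Qed.

Lemma log_sinhc_even z : log_sinhc (- z) = log_sinhc z.
Proof.
  destruct (Req_dec z 0) as [->|]; [now rewrite Ropp_0|].
  unfold log_sinhc; rewrite sinh_opp; f_equal; field; auto.
Qed.

Lemma zcoth_sub1_even z : zcoth_sub1 (- z) = zcoth_sub1 z.
Proof.
  destruct (Req_dec z 0) as [->|]; [now rewrite Ropp_0|].
  unfold zcoth_sub1; rewrite sinh_opp, cosh_opp; field; now apply sinh_neq0.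
Qed.

Lemma even_bound_extend (h : R -> R) : (forall z, h (- z) = h z) ->
  (forall z, 0 < z <= 1 -> Rabs (h z) <= z ^ 6) ->
  forall z, z <> 0 -> Rabs z <= 1 -> Rabs (h z) <= z ^ 6.
Proof.
  intros Heven Hpos z Hz0 Hz; destruct (Rlt_dec 0 z).
  - rewrite Rabs_right in Hz by lra; apply Hpos; lra.
  - rewrite Rabs_left in Hz by lra.
    rewrite <- Heven; replace (z ^ 6) with ((- z) ^ 6) by ring; apply Hpos; lra.
Qed.

(* The junk values [0 / 0 = 0] and [ln 0 = 0] make [log_sinhc] agree at 0 with
   its limiting value. *)
Lemma log_sinhc_0 : log_sinhc 0 = 0.
Proof.
  unfold log_sinhc, Rdiv; rewrite Rinv_0, Rmult_0_r.
  unfold ln; destruct (Rlt_dec 0 0); [exfalso; lra | reflexivity].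
Qed.

Lemma log_sinhc_expansion z : Rabs z <= 1 ->
  Rabs (log_sinhc z - (z ^ 2 / 6 - z ^ 4 / 180)) <= z ^ 6.
Proof.
  intros Hz; destruct (Req_dec z 0) as [->|Hz0].
  - rewrite log_sinhc_0; replace (0 - (0 ^ 2 / 6 - 0 ^ 4 / 180)) with 0 by field.
    rewrite Rabs_R0; simpl; lra.
  - apply (even_bound_extend (fun z => log_sinhc z - (z ^ 2 / 6 - z ^ 4 / 180))); auto.
    + intros; cbv beta; rewrite log_sinhc_even; field.
    + exact log_sinhc_expansion_pos.
Qed.

Lemma zcoth_sub1_expansion z : z <> 0 -> Rabs z <= 1 ->
  Rabs (zcoth_sub1 z - (z ^ 2 / 3 - z ^ 4 / 45)) <= z ^ 6.
Proof.
  apply (even_bound_extend (fun z => zcoth_sub1 z - (z ^ 2 / 3 - z ^ 4 / 45))).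
  - intros; cbv beta; rewrite zcoth_sub1_even; field.
  - exact zcoth_sub1_expansion_pos.
Qed.

(* The branch v = 0 matters only on the diagonal, where [zcoth_sub1 0 / r]
   would be [-1 / r]. *)
Definition stolarsky_profile (p r v : R) : R :=
  if Req_EM_T v 0 then 0
  else if Req_EM_T p r then zcoth_sub1 (r * v) / r
  else (log_sinhc (p * v) - log_sinhc (r * v)) / (p - r).

Lemma mul_le1_of_small a v p r : (Rabs a <= Rabs p \/ Rabs a <= Rabs r) ->
  Rabs v <= / (1 + Rabs p + Rabs r) -> Rabs (a * v) <= 1.
Proof.
  intros Ha Hv; pose proof (Rabs_pos p); pose proof (Rabs_pos r); pose proof (Rabs_pos v).
  rewrite Rabs_mult.
  apply (Rmult_le_compat_l (1 + Rabs p + Rabs r)) in Hv; [|lra].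
  rewrite Rinv_r in Hv by lra.
  assert (Rabs a * Rabs v <= (1 + Rabs p + Rabs r) * Rabs v) by (apply Rmult_le_compat_r; lra).
  lra.
Qed.

Lemma stolarsky_profile_expansion p r : (p = r -> r <> 0) ->
  exists C, forall v, Rabs v <= / (1 + Rabs p + Rabs r) ->
    Rabs (stolarsky_profile p r v
          - ((p + r) / 6 * v ^ 2 + (- (p + r) * (p ^ 2 + r ^ 2) / 180) * v ^ 4))
    <= C * v ^ 6.
Proof.
  intros Hpr; unfold stolarsky_profile; destruct (Req_EM_T p r) as [<-|Hpr'].
  - specialize (Hpr eq_refl); exists (p ^ 6 / Rabs p); intros v Hv.
    destruct (Req_EM_T v 0) as [->|Hv0].
    { replace (0 - _) with 0 by field; rewrite Rabs_R0; simpl; lra. }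
    pose proof (zcoth_sub1_expansion (p * v) ltac:(now apply Rmult_integral_contrapositive)
                  (mul_le1_of_small p v p p (or_introl (Rle_refl _)) Hv)) as H.
    replace (zcoth_sub1 (p * v) / p - ((p + p) / 6 * v ^ 2
               + - (p + p) * (p ^ 2 + p ^ 2) / 180 * v ^ 4))
      with ((zcoth_sub1 (p * v) - ((p * v) ^ 2 / 3 - (p * v) ^ 4 / 45)) / p) by (field; auto).
    assert (0 < Rabs p) by (apply Rabs_pos_lt; auto).
    unfold Rdiv; rewrite Rabs_mult, Rabs_inv.
    replace (p ^ 6 * / Rabs p * v ^ 6) with ((p * v) ^ 6 * / Rabs p) by (field; lra).
    apply Rmult_le_compat_r; [left; apply Rinv_0_lt_compat|]; auto.
  - exists ((p ^ 6 + r ^ 6) / Rabs (p - r)); intros v Hv.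
    destruct (Req_EM_T v 0) as [->|Hv0].
    { replace (0 - _) with 0 by field; rewrite Rabs_R0; simpl; lra. }
    pose proof (log_sinhc_expansion (p * v)
                  (mul_le1_of_small p v p r (or_introl (Rle_refl _)) Hv)) as Hp.
    pose proof (log_sinhc_expansion (r * v)
                  (mul_le1_of_small r v p r (or_intror (Rle_refl _)) Hv)) as Hr.
    assert (p - r <> 0) by lra.
    replace ((log_sinhc (p * v) - log_sinhc (r * v)) / (p - r)
               - ((p + r) / 6 * v ^ 2 + - (p + r) * (p ^ 2 + r ^ 2) / 180 * v ^ 4))
      with (((log_sinhc (p * v) - ((p * v) ^ 2 / 6 - (p * v) ^ 4 / 180))
             - (log_sinhc (r * v) - ((r * v) ^ 2 / 6 - (r * v) ^ 4 / 180))) / (p - r))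
      by (field; auto).
    assert (0 < Rabs (p - r)) by (apply Rabs_pos_lt; auto).
    unfold Rdiv; rewrite Rabs_mult, Rabs_inv.
    replace ((p ^ 6 + r ^ 6) * / Rabs (p - r) * v ^ 6)
      with (((p * v) ^ 6 + (r * v) ^ 6) * / Rabs (p - r)) by (field; lra).
    apply Rmult_le_compat_r; [left; apply Rinv_0_lt_compat; auto|].
    unfold Rminus at 1; eapply Rle_trans; [apply Rabs_triang|]; rewrite Rabs_Ropp; lra.
Qed.

Lemma Rpower_exp a b : Rpower (exp a) b = exp (b * a).
Proof. unfold Rpower; now rewrite ln_exp. Qed.

Lemma exp_divided_diff k x y : k <> 0 -> x <> y ->
  (exp (k * y) - exp (k * x)) / (k * (y - x))
  = exp (k * ((x + y) / 2) + log_sinhc (k * ((y - x) / 2))).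
Proof.
  intros Hk Hxy.
  assert (Hkv : k * ((y - x) / 2) <> 0) by (apply Rmult_integral_contrapositive; split; lra).
  unfold log_sinhc; rewrite exp_plus, exp_ln by now apply sinhc_pos.
  unfold sinh.
  replace (k * y) with (k * ((x + y) / 2) + k * ((y - x) / 2)) by field.
  replace (k * x) with (k * ((x + y) / 2) + - (k * ((y - x) / 2))) by field.
  rewrite !exp_plus; field; split; lra.
Qed.

Lemma stolarsky_exp_lr r x y : r <> 0 -> x <> y ->
  Rpower ((Rpower (exp y) r - Rpower (exp x) r) / (r * (ln (exp y) - ln (exp x)))) (1 / r)
  = exp ((x + y) / 2 + log_sinhc (r * ((y - x) / 2)) / r).
Proof.
  intros Hr Hxy; rewrite !Rpower_exp, !ln_exp, exp_divided_diff, Rpower_exp by auto.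
  f_equal; field; auto.
Qed.

Lemma stolarsky_exp p r x y : (p = r -> r <> 0) ->
  stolarsky p r (exp x) (exp y) = exp (log_mean (stolarsky_profile p r) x y).
Proof.
  intros Hpr; unfold stolarsky, log_mean, stolarsky_profile.
  destruct (Req_EM_T (exp x) (exp y)) as [E|E].
  { apply exp_inv in E; subst; replace ((y - y) / 2) with 0 by field.
    destruct (Req_EM_T 0 0) as [_|]; [|tauto]; f_equal; field. }
  assert (Hxy : x <> y) by (intros ->; auto).
  assert (Hv : (y - x) / 2 <> 0) by lra.
  destruct (Req_EM_T ((y - x) / 2) 0) as [|_]; [tauto|].
  destruct (Req_EM_T p 0) as [->|Hp]; destruct (Req_EM_T r 0) as [->|Hr].
  - exfalso; now apply Hpr.
  - destruct (Req_EM_T 0 r) as [|_]; [lra|].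
    rewrite stolarsky_exp_lr, Rmult_0_l, log_sinhc_0 by auto; f_equal; field; auto.
  - destruct (Req_EM_T p 0) as [|_]; [lra|].
    rewrite stolarsky_exp_lr, Rmult_0_l, log_sinhc_0 by auto; f_equal; field; auto.
  - destruct (Req_EM_T p r) as [<-|Hpr'].
    + set (c := (x + y) / 2); set (v := (y - x) / 2).
      assert (Hpv : p * v <> 0) by (apply Rmult_integral_contrapositive; split; auto).
      pose proof (sinh_neq0 _ Hpv) as Hsh.
      rewrite !Rpower_exp.
      replace (exp (exp (p * y) * y) / exp (exp (p * x) * x))
        with (exp (exp (p * y) * y - exp (p * x) * x))
        by (unfold Rminus; rewrite exp_plus, exp_Ropp; field; apply Rgt_not_eq, exp_pos).
      rewrite Rpower_exp, <- exp_plus; f_equal.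
      replace y with (c + v) by (unfold c, v; field).
      replace x with (c - v) by (unfold c, v; field).
      unfold zcoth_sub1, sinh, cosh in *.
      replace (p * (c + v)) with (p * c + p * v) by ring.
      replace (p * (c - v)) with (p * c + - (p * v)) by ring.
      rewrite !exp_plus; pose proof (exp_pos (p * c)).
      assert (Hdiff : exp (p * v) - exp (- (p * v)) <> 0) by lra.
      field; repeat split; auto.
      intros Hc; apply Hdiff, (Rmult_eq_reg_l (exp (p * c))); lra.
    + assert (Hd : forall k, k <> 0 -> exp (k * y) - exp (k * x)
                     = k * (y - x) * exp (k * ((x + y) / 2) + log_sinhc (k * ((y - x) / 2)))).
      { intros k Hk; rewrite <- exp_divided_diff by auto; field; split; lra. }
      rewrite !Rpower_exp, (Hd p), (Hd r) by auto.
      set (Ap := p * ((x + y) / 2) + log_sinhc (p * ((y - x) / 2))).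
      set (Ar := r * ((x + y) / 2) + log_sinhc (r * ((y - x) / 2))).
      replace (r * (p * (y - x) * exp Ap) / (p * (r * (y - x) * exp Ar))) with (exp (Ap - Ar))
        by (unfold Rminus; rewrite exp_plus, exp_Ropp; field;
            pose proof (exp_pos Ar); repeat split; lra).
      rewrite Rpower_exp; f_equal; unfold Ap, Ar; field; lra.
Qed.

Lemma stable_profile p r : (p = r -> r <> 0) -> stable (stolarsky p r) ->
  forall u, 0 < u -> stolarsky_profile p r u
    = log_mean (stolarsky_profile p r)
        (log_mean (stolarsky_profile p r) (- u) (stolarsky_profile p r u))
        (log_mean (stolarsky_profile p r) (stolarsky_profile p r u) u).
Proof.
  intros Hpr Hst u Hu; set (F := stolarsky_profile p r).
  pose proof (Hst (exp (- u)) (exp u) (exp_pos _) (exp_pos _)) as H.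
  rewrite !stolarsky_exp in H by auto; apply exp_inv in H; fold F in H.
  replace (log_mean F (- u) u) with (F u) in H; [exact H|].
  unfold log_mean; replace ((- u + u) / 2) with 0 by field.
  replace ((u - - u) / 2) with u by field; ring.
Qed.

Lemma stolarsky_stable_constraint p r : stable (stolarsky p r) ->
  (p - 2 * r) * (r - 2 * p) * (p + r) = 0.
Proof.
  intros Hst; destruct (Req_dec (p + r) 0) as [Hpr|Hpr]; [rewrite Hpr; ring|].
  assert (Hne : p = r -> r <> 0) by (intros -> ->; apply Hpr; ring).
  destruct (stolarsky_profile_expansion p r Hne) as [C HC].
  assert (Hd0 : 0 < / (1 + Rabs p + Rabs r))
    by (apply Rinv_0_lt_compat; pose proof (Rabs_pos p); pose proof (Rabs_pos r); lra).
  pose proof (stable_expansion_constraint _ _ _ _ _ Hd0 HC (stable_profile p r Hne Hst)) as K.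
  replace ((p - 2 * r) * (r - 2 * p) * (p + r))
    with (270 * (3 * (- (p + r) * (p ^ 2 + r ^ 2) / 180) + 2 * ((p + r) / 6) ^ 3)) by field.
  rewrite K; ring.
Qed.

Lemma stable_eq_on_pos (M N : R -> R -> R) :
  (forall s t, 0 < s -> 0 < t -> M s t = N s t) ->
  (forall s t, 0 < s -> 0 < t -> 0 < N s t) -> stable N -> stable M.
Proof.
  intros E Npos HN s t Hs Ht; rewrite (E s t Hs Ht); pose proof (Npos s t Hs Ht) as Hm.
  rewrite (E s (N s t) Hs Hm), (E (N s t) t Hm Ht).
  rewrite (E _ _ (Npos _ _ Hs Hm) (Npos _ _ Hm Ht)); apply HN; auto.
Qed.

Definition power_mean (r s t : R) : R := Rpower ((Rpower s r + Rpower t r) / 2) (1 / r).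
Definition geometric_mean (s t : R) : R := sqrt (s * t).

Lemma Rpower_pos a b : 0 < Rpower a b.
Proof. apply exp_pos. Qed.

Lemma Rpower_inv_pow a r : 0 < a -> r <> 0 -> Rpower (Rpower a (1 / r)) r = a.
Proof.
  intros; rewrite Rpower_mult; replace (1 / r * r) with 1 by (field; auto).
  now apply Rpower_1.
Qed.

Lemma Rpower_pow_inv a r : 0 < a -> r <> 0 -> Rpower (Rpower a r) (1 / r) = a.
Proof.
  intros; rewrite Rpower_mult; replace (r * (1 / r)) with 1 by (field; auto).
  now apply Rpower_1.
Qed.

Lemma Rpower_inj s t r : 0 < s -> 0 < t -> r <> 0 -> Rpower s r = Rpower t r -> s = t.
Proof.
  intros Hs Ht Hr E; unfold Rpower in E; apply exp_inv in E.
  apply ln_inv; auto; now apply (Rmult_eq_reg_l r).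
Qed.

Lemma power_mean_pos r s t : 0 < power_mean r s t.
Proof. apply Rpower_pos. Qed.

Lemma power_mean_pow r s t : r <> 0 ->
  Rpower (power_mean r s t) r = (Rpower s r + Rpower t r) / 2.
Proof.
  intros; apply Rpower_inv_pow; auto.
  pose proof (Rpower_pos s r); pose proof (Rpower_pos t r); lra.
Qed.

Lemma power_mean_stable r : r <> 0 -> stable (power_mean r).
Proof.
  intros Hr s t Hs Ht; apply (Rpower_inj _ _ r); auto using power_mean_pos.
  rewrite !power_mean_pow by auto; lra.
Qed.

Lemma geometric_mean_pos s t : 0 < s -> 0 < t -> 0 < geometric_mean s t.
Proof. intros; apply sqrt_lt_R0; nra. Qed.

Lemma geometric_mean_stable : stable geometric_mean.
Proof.
  intros s t Hs Ht; unfold geometric_mean; set (m := sqrt (s * t)).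
  assert (Hm : 0 < m) by (apply sqrt_lt_R0; nra).
  assert (Hmm : m * m = s * t) by (apply sqrt_sqrt; nra).
  rewrite <- sqrt_mult by nra.
  replace (s * m * (m * t)) with ((m * m) * (m * m)) by (rewrite Hmm at 1; ring).
  rewrite sqrt_square by nra; symmetry; apply sqrt_square; lra.
Qed.

Lemma stolarsky_0_0 s t : 0 < s -> 0 < t -> stolarsky 0 0 s t = geometric_mean s t.
Proof.
  intros; unfold stolarsky, geometric_mean; destruct (Req_EM_T s t) as [->|].
  - symmetry; apply sqrt_square; lra.
  - destruct (Req_EM_T 0 0); [reflexivity | tauto].
Qed.

Lemma Rpower_inv_base a b : 0 < a -> Rpower (/ a) b = Rpower a (- b).
Proof. intros; unfold Rpower; rewrite ln_Rinv by auto; f_equal; ring. Qed.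

Lemma Rpower_sub_neq0 s t r : 0 < s -> 0 < t -> r <> 0 -> s <> t ->
  Rpower t r - Rpower s r <> 0.
Proof. intros Hs Ht Hr Hst E; apply Hst, (Rpower_inj s t r); auto; lra. Qed.

Lemma power_mean_diag r s : 0 < s -> r <> 0 -> power_mean r s s = s.
Proof.
  intros; unfold power_mean.
  replace ((Rpower s r + Rpower s r) / 2) with (Rpower s r) by field.
  now apply Rpower_pow_inv.
Qed.

Lemma stolarsky_2r_r r s t : r <> 0 -> 0 < s -> 0 < t ->
  stolarsky (2 * r) r s t = power_mean r s t.
Proof.
  intros Hr Hs Ht; unfold stolarsky.
  destruct (Req_EM_T s t) as [->|Hst]; [now rewrite power_mean_diag|].
  destruct (Req_EM_T (2 * r) 0); [lra|]; destruct (Req_EM_T r 0); [tauto|].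
  destruct (Req_EM_T (2 * r) r); [lra|].
  pose proof (Rpower_sub_neq0 s t r Hs Ht Hr Hst).
  unfold power_mean; replace (2 * r) with (r + r) by ring; rewrite !Rpower_plus.
  f_equal; field; repeat split; auto; intro; lra.
Qed.

Lemma stolarsky_p_2p p s t : p <> 0 -> 0 < s -> 0 < t ->
  stolarsky p (2 * p) s t = power_mean p s t.
Proof.
  intros Hp Hs Ht; unfold stolarsky.
  destruct (Req_EM_T s t) as [->|Hst]; [now rewrite power_mean_diag|].
  destruct (Req_EM_T p 0); [tauto|]; destruct (Req_EM_T (2 * p) 0); [lra|].
  destruct (Req_EM_T p (2 * p)); [lra|].
  pose proof (Rpower_sub_neq0 s t p Hs Ht Hp Hst).
  pose proof (Rpower_pos t p); pose proof (Rpower_pos s p).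
  unfold power_mean; replace (2 * p) with (p + p) by ring; rewrite !Rpower_plus.
  replace ((p + p) * (Rpower t p - Rpower s p)
           / (p * (Rpower t p * Rpower t p - Rpower s p * Rpower s p)))
    with (/ ((Rpower s p + Rpower t p) / 2)).
  - rewrite Rpower_inv_base by lra; f_equal; field; split; [auto | intro; lra].
  - replace (Rpower t p * Rpower t p - Rpower s p * Rpower s p)
      with ((Rpower t p - Rpower s p) * (Rpower t p + Rpower s p)) by ring.
    field; repeat split; auto; intro; lra.
Qed.

Lemma stolarsky_opp r s t : r <> 0 -> 0 < s -> 0 < t ->
  stolarsky (- r) r s t = geometric_mean s t.
Proof.
  intros Hr Hs Ht; unfold stolarsky, geometric_mean.
  destruct (Req_EM_T s t) as [->|Hst]; [symmetry; apply sqrt_square; lra|].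
  destruct (Req_EM_T (- r) 0); [lra|]; destruct (Req_EM_T r 0); [tauto|].
  destruct (Req_EM_T (- r) r); [lra|].
  pose proof (Rpower_sub_neq0 s t r Hs Ht Hr Hst).
  pose proof (Rpower_pos t r); pose proof (Rpower_pos s r).
  rewrite !Rpower_Ropp.
  replace (r * (/ Rpower t r - / Rpower s r) / (- r * (Rpower t r - Rpower s r)))
    with (/ (Rpower s r * Rpower t r)) by (field; repeat split; auto; intro; lra).
  rewrite Rpower_inv_base by nra.
  rewrite <- Rpower_sqrt by nra; unfold Rpower.
  rewrite !ln_mult, !ln_exp by auto; f_equal; field; intro; lra.
Qed.

Lemma stolarsky_0_0_stable : stable (stolarsky 0 0).
Proof.
  apply (stable_eq_on_pos _ geometric_mean);
    auto using stolarsky_0_0, geometric_mean_pos, geometric_mean_stable.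
Qed.

Lemma stolarsky_2r_r_stable r : stable (stolarsky (2 * r) r).
Proof.
  destruct (Req_dec r 0) as [->|Hr]; [rewrite Rmult_0_r; apply stolarsky_0_0_stable|].
  apply (stable_eq_on_pos _ (power_mean r));
    auto using stolarsky_2r_r, power_mean_pos, power_mean_stable.
Qed.

Lemma stolarsky_p_2p_stable p : stable (stolarsky p (2 * p)).
Proof.
  destruct (Req_dec p 0) as [->|Hp]; [rewrite Rmult_0_r; apply stolarsky_0_0_stable|].
  apply (stable_eq_on_pos _ (power_mean p));
    auto using stolarsky_p_2p, power_mean_pos, power_mean_stable.
Qed.

Lemma stolarsky_opp_stable r : stable (stolarsky (- r) r).
Proof.
  destruct (Req_dec r 0) as [->|Hr]; [rewrite Ropp_0; apply stolarsky_0_0_stable|].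
  apply (stable_eq_on_pos _ geometric_mean);
    auto using stolarsky_opp, geometric_mean_pos, geometric_mean_stable.
Qed.

Theorem mainTheorem14 (p r : R) :
  stable (stolarsky p r) <-> (p - 2 * r) * (r - 2 * p) * (p + r) = 0.
Proof.
  split; [apply stolarsky_stable_constraint|].
  intros H; destruct (Rmult_integral _ _ H) as [H12|Hsum];
    [destruct (Rmult_integral _ _ H12) as [H1|H2] |].
  - replace p with (2 * r) by lra; apply stolarsky_2r_r_stable.
  - replace r with (2 * p) by lra; apply stolarsky_p_2p_stable.
  - replace p with (- r) by lra; apply stolarsky_opp_stable.
Qed.
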